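(* Let $I$ be a monoid and let $A$ be a finite set with an $I$-action $(\alpha_l,\alpha_r)$ whose left component $\alpha_l$ is trivial. Let $\mathrm{A}^r=\{x\in A:\ \text{for all } i\in I,\ \alpha_r(i)|_{xI}\text{ is one-to-one}\}$, where $xI=\{(x)\alpha_r(i):i\in I\}$. Then there is a bijection $\mathrm{Map}^r_I(A)\cong\mathrm{A}^r$.
   Context: Let $I$ be a monoid with operation $\otimes$. For a set $X$, $\mathrm{End}_l(X)$ denotes self-maps written on the left with product $f\circ g$ ($g$ first); $\mathrm{End}_r(X)$ denotes self-maps written on the right, $x\mapsto(x)f$, with $(x)(fg)=((x)f)g$. An $I$-action on $X$ is a pair $(\xi_l,\xi_r)$ of monoid homomorphisms $\xi_l:I\to\mathrm{End}_l(X)$, $\xi_r:I\to\mathrm{End}_r(X)$ with $(\xi_l(i)(x))\xi_r(j)=\xi_l(i)((x)\xi_r(j))$; ''$\alpha_l$ trivial'' means $\alpha_l(i)=\mathrm{id}_A$ for all $i$. $\mathrm{Map}^r_I(A)$ is the set of functions $f:I\to A$ with $(f(i\otimes j))\alpha_r(i)=\alpha_l(i)(f(j))$ for all $i,j\in I$ (here: $(f(i\otimes j))\alpha_r(i)=f(j)$). *)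

From mathcomp Require Import all_boot.
Set Implicit Arguments. Unset Strict Implicit. Unset Printing Implicit Defensive.

Definition is_monoid (I : Type) (op : I -> I -> I) (e : I) : Prop :=
  [/\ forall i j k, op i (op j k) = op (op i j) k,
      forall i, op e i = i &
      forall i, op i e = i].

Definition left_hom (I X : Type) (op : I -> I -> I) (e : I)
  (xl : I -> X -> X) : Prop :=
  (forall x, xl e x = x) /\
  (forall i j x, xl (op i j) x = xl i (xl j x)).

(* xi_r : I -> End_r(X) monoid homomorphism: (x)(fg) = ((x)f)g;
   we write (x)xi_r(i) as  xr i x. *)
Definition right_hom (I X : Type) (op : I -> I -> I) (e : I)
  (xr : I -> X -> X) : Prop :=
  (forall x, xr e x = x) /\
  (forall i j x, xr (op i j) x = xr j (xr i x)).

Definition is_I_action (I X : Type) (op : I -> I -> I) (e : I)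
  (xl xr : I -> X -> X) : Prop :=
  [/\ left_hom op e xl, right_hom op e xr &
      forall i j x, xr j (xl i x) = xl i (xr j x)].

Definition MapR_prop (I A : Type) (op : I -> I -> I)
  (al ar : I -> A -> A) (f : I -> A) : Prop :=
  forall i j, ar i (f (op i j)) = al i (f j).

Definition MapR (I A : Type) (op : I -> I -> I) (al ar : I -> A -> A) :=
  {f : I -> A | MapR_prop op al ar f}.

Definition orbitR (I A : Type) (ar : I -> A -> A) (x : A) : A -> Prop :=
  fun y => exists i, y = ar i x.

Definition AR_prop (I A : Type) (ar : I -> A -> A) (x : A) : Prop :=
  forall i y z, orbitR ar x y -> orbitR ar x z -> ar i y = ar i z -> y = z.

Definition AR (I A : Type) (ar : I -> A -> A) := {x : A | AR_prop ar x}.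

(* Since alpha_l is trivial, f in Map^r_I(A) satisfies (f(i j))alpha_r(i) = f(j).
   Hence every alpha_r(k) maps the finite image of f onto itself, so it permutes
   that image; the image is the orbit f(e)I, and f(e) lies in A^r.  Conversely,
   for x in A^r each alpha_r(i) permutes the finite orbit xI, and f(i) is the
   unique y in xI with (y)alpha_r(i) = x.  The two maps f |-> f(e) and x |-> f
   are mutually inverse. *)
From mathcomp Require Import all_boot.
From mathcomp Require Import boolp.

Set Implicit Arguments.
Unset Strict Implicit.

Lemma injective_of_cover (A : finType) (F : A -> A) (X : {set A}) :
  X \subset F @: X -> {in X &, injective F} /\ F @: X = X.
Proof.
move=> cover; have le_card := leq_imset_card F X.
have card_eq : #|F @: X| = #|X|.
  by apply/eqP; rewrite eqn_leq le_card subset_leq_card.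
split; first by apply/imset_injP; rewrite card_eq.
by apply/eqP; rewrite eq_sym eqEcard cover card_eq leqnn.
Qed.

Lemma imset_stable_injective (A : finType) (F : A -> A) (X : {set A}) :
  {in X &, injective F} -> F @: X \subset X -> F @: X = X.
Proof. by move=> injF sub; apply/eqP; rewrite eqEcard sub (card_in_imset injF) leqnn. Qed.

Section RightAction.

Variables (I : Type) (op : I -> I -> I) (e : I) (A : finType) (ar : I -> A -> A).
Hypothesis op_e : forall i, op i e = i.
Hypothesis ar_e : forall x, ar e x = x.
Hypothesis ar_op : forall i j x, ar (op i j) x = ar j (ar i x).

Definition orbit_set (x : A) : {set A} := [set y | `[< orbitR ar x y >]].

Lemma orbit_setP x y : reflect (exists i, y = ar i x) (y \in orbit_set x).
Proof. by rewrite inE; apply: asboolP. Qed.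

Lemma orbit_set_refl x : x \in orbit_set x.
Proof. by apply/orbit_setP; exists e; rewrite ar_e. Qed.

Lemma orbit_set_stable x i y : y \in orbit_set x -> ar i y \in orbit_set x.
Proof. by case/orbit_setP=> k ->; apply/orbit_setP; exists (op k i); rewrite ar_op. Qed.

Lemma AR_propE x : AR_prop ar x <-> forall i, {in orbit_set x &, injective (ar i)}.
Proof.
split=> [hx i y z /orbit_setP yx /orbit_setP zx | hx i y z yx zx]; first exact: hx.
by apply: hx; apply/orbit_setP.
Qed.

Lemma orbit_set_onto x i :
  {in orbit_set x &, injective (ar i)} -> ar i @: orbit_set x = orbit_set x.
Proof.
move=> injF; apply: imset_stable_injective => //.
by apply/subsetP=> _ /imsetP [y yO ->]; apply: orbit_set_stable.
Qed.

Section MapR.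

Variable f : I -> A.
Hypothesis fP : forall i j, ar i (f (op i j)) = f j.

Definition range_set : {set A} := [set y | `[< exists m, y = f m >]].

Lemma range_setP y : reflect (exists m, y = f m) (y \in range_set).
Proof. by rewrite inE; apply: asboolP. Qed.

Lemma mem_range_set m : f m \in range_set.
Proof. by apply/range_setP; exists m. Qed.

Lemma ar_permutes_range k :
  {in range_set &, injective (ar k)} /\ ar k @: range_set = range_set.
Proof.
apply: injective_of_cover; apply/subsetP=> _ /range_setP [j ->].
by rewrite -(fP k j); apply/imset_f/mem_range_set.
Qed.

Lemma orbit_sub_range : orbit_set (f e) \subset range_set.
Proof.
apply/subsetP=> _ /orbit_setP [i ->].
by rewrite -(ar_permutes_range i).2; apply/imset_f/mem_range_set.
Qed.

Lemma mapR_AR : AR_prop ar (f e).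
Proof.
apply/AR_propE=> i y z /(subsetP orbit_sub_range) yX /(subsetP orbit_sub_range).
exact: (ar_permutes_range i).1.
Qed.

(* f(k) is the preimage of f(e) under alpha_r(k), which also permutes the
   orbit of f(e); so that preimage lies in the orbit. *)
Lemma mem_orbit_mapR k : f k \in orbit_set (f e).
Proof.
have onto := orbit_set_onto (proj1 (AR_propE _) mapR_AR k).
have /imsetP [y yO fe_y] : f e \in ar k @: orbit_set (f e).
  by rewrite onto orbit_set_refl.
suff -> : f k = y by [].
apply: (ar_permutes_range k).1; rewrite ?mem_range_set //.
  exact: subsetP orbit_sub_range y yO.
by rewrite -fe_y -(fP k e) op_e.
Qed.

End MapR.

Section Inverse.

Variables (x : A) (hx : AR_prop ar x).

Definition orbit_preimage (i : I) : A :=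
  odflt x [pick y in orbit_set x | ar i y == x].

Lemma orbit_preimageP i :
  orbit_preimage i \in orbit_set x /\ ar i (orbit_preimage i) = x.
Proof.
rewrite /orbit_preimage; case: pickP => [y /andP [yO /eqP] // | none].
have onto := orbit_set_onto (proj1 (AR_propE x) hx i).
have /imsetP [y yO xy] : x \in ar i @: orbit_set x by rewrite onto orbit_set_refl.
by have := none y; rewrite yO -xy eqxx.
Qed.

Lemma orbit_preimage_unique i y :
  y \in orbit_set x -> ar i y = x -> orbit_preimage i = y.
Proof.
move=> yO xy; have [pO xp] := orbit_preimageP i.
by apply: (proj1 (AR_propE x) hx i) => //; rewrite xp xy.
Qed.

Lemma orbit_preimage_mapR i j :
  ar i (orbit_preimage (op i j)) = orbit_preimage j.
Proof.
have [pO xp] := orbit_preimageP (op i j).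
apply/esym/orbit_preimage_unique; first exact: orbit_set_stable.
by rewrite -ar_op.
Qed.

Lemma orbit_preimage_e : orbit_preimage e = x.
Proof. by apply: orbit_preimage_unique; rewrite ?orbit_set_refl ?ar_e. Qed.

End Inverse.

End RightAction.

Theorem mainTheorem12 (I : Type) (op : I -> I -> I) (e : I)
  (A : finType) (al ar : I -> A -> A) :
  is_monoid op e ->
  is_I_action op e al ar ->
  (forall i x, al i x = x) ->
  exists phi : MapR op al ar -> AR ar, bijective phi.
Proof.
case=> _ _ op_e [_ [ar_e ar_op] _] al_id.
have fP (f : MapR op al ar) i j : ar i (sval f (op i j)) = sval f j.
  by case: f => g /= gP; rewrite gP al_id.
have gP (x : AR ar) : MapR_prop op al ar (orbit_preimage ar (sval x)).
  by move=> i j; rewrite al_id; apply: (orbit_preimage_mapR ar_e ar_op (svalP x)).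
pose phi (f : MapR op al ar) : AR ar := exist _ (sval f e) (mapR_AR (fP f)).
pose psi (x : AR ar) : MapR op al ar := exist _ _ (gP x).
exists phi; exists psi => [f | x];
  apply: eq_sig_hprop => [? ? ? | /=]; try exact: Prop_irrelevance.
- apply: funext => i; apply: (orbit_preimage_unique ar_e ar_op (mapR_AR (fP f))).
  + exact: (mem_orbit_mapR op_e ar_e ar_op (fP f) i).
  + by rewrite -(fP f i e) op_e.
- exact: (orbit_preimage_e ar_e ar_op (svalP x)).
Qed.
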